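(* Let $\mathcal P$ be a finite-dimensional solvable Poisson $n$-Lie algebra over a field of characteristic $0$. Then $d(\operatorname{Nil}(\mathcal P))\subseteq\operatorname{Nil}(\mathcal P)$ for every derivation $d$ of $\mathcal P$.
   Context: A Poisson $n$-Lie algebra is a commutative associative algebra $(\mathcal P,\cdot)$ with an $n$-linear skew-symmetric bracket satisfying the fundamental identity $[x_1,\dots,x_{n-1},[y_1,\dots,y_n]]=\sum_{i=1}^n[y_1,\dots,[x_1,\dots,x_{n-1},y_i],\dots,y_n]$ and the Leibniz rule $[y\cdot z,x_2,\dots,x_n]=y\cdot[z,x_2,\dots,x_n]+z\cdot[y,x_2,\dots,x_n]$. A derivation of $\mathcal P$ is a linear map $d$ with $d(x\cdot y)=d(x)\cdot y+x\cdot d(y)$ and $d([x_1,\dots,x_n])=\sum_i[x_1,\dots,d(x_i),\dots,x_n]$. Products/brackets of subspaces are linear spans. An ideal $\mathcal I$ is nilpotent if $\mathcal I^s=0$ for some $s$, where $\mathcal I^1=\mathcal I$, $\mathcal I^{k+1}=[\mathcal I^k,\mathcal I,\mathcal P,\dots,\mathcal P]+\mathcal I^k\cdot\mathcal I$; $\operatorname{Nil}(\mathcal P)$ is the maximal nilpotent ideal. $\mathcal P$ is solvable if $\mathcal P^{(s)}=0$ for some $s$, with $\mathcal P^{(1)}=\mathcal P$, $\mathcal P^{(k+1)}=[\mathcal P^{(k)},\mathcal P^{(k)},\mathcal P,\dots,\mathcal P]+\mathcal P^{(k)}\cdot\mathcal P^{(k)}$. *)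

From HB Require Import structures.
From mathcomp Require Import all_boot all_order all_algebra all_fingroup.
Set Implicit Arguments. Unset Strict Implicit. Unset Printing Implicit Defensive.
Import GRing.Theory.
Local Open Scope ring_scope.

Section PoissonNLie.
Variables (F : fieldType) (V : vectType F) (n : nat).

Definition upd (x : 'I_n -> V) (i : 'I_n) (w : V) : 'I_n -> V :=
  fun k => if k == i then w else x k.
Definition upd_first (x : 'I_n -> V) (w : V) : 'I_n -> V :=
  fun k => if val k == 0%N then w else x k.
Definition upd_last (x : 'I_n -> V) (w : V) : 'I_n -> V :=
  fun k => if val k == n.-1 then w else x k.

Variables (mul : V -> V -> V) (br : ('I_n -> V) -> V).

Record poisson_nlie : Prop := {
  mul_linl : forall (a : F) u v w, mul (a *: u + v) w = a *: mul u w + mul v w;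
  mul_comm : forall u v, mul u v = mul v u;
  mul_assoc : forall u v w, mul u (mul v w) = mul (mul u v) w;
  br_multilinear : forall (x : 'I_n -> V) (i : 'I_n) (a : F) u v,
    br (upd x i (a *: u + v)) = a *: br (upd x i u) + br (upd x i v);
  br_skew : forall (s : 'S_n) (x : 'I_n -> V),
    br (fun k => x (s k)) = (-1) ^+ s *: br x;
  br_fundamental : forall x y : 'I_n -> V,
    br (upd_last x (br y)) = \sum_(i < n) br (upd y i (br (upd_last x (y i))));
  br_leibniz : forall (x : 'I_n -> V) y z,
    br (upd_first x (mul y z)) =
      mul y (br (upd_first x z)) + mul z (br (upd_first x y))
}.

Definition derivation (d : V -> V) : Prop :=
  [/\ forall (a : F) u v, d (a *: u + v) = a *: d u + d v,
      forall u v, d (mul u v) = mul (d u) v + mul u (d v)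
    & forall x : 'I_n -> V, d (br x) = \sum_(i < n) br (upd x i (d (x i)))].

(* Subspaces of V are represented by predicates; the span of a set S *)
Definition span_of (S : V -> Prop) : V -> Prop :=
  fun v => exists s : seq V, (forall u, u \in s -> S u) /\ v \in <<s>>%VS.

Definition full : V -> Prop := fun _ => True.

Definition brS (A B : V -> Prop) : V -> Prop :=
  span_of (fun v => exists z : 'I_n -> V,
    [/\ forall k : 'I_n, val k = 0%N -> A (z k),
        forall k : 'I_n, val k = 1%N -> B (z k)
      & v = br z]).

Definition mulS (A B : V -> Prop) : V -> Prop :=
  span_of (fun v => exists a b, [/\ A a, B b & v = mul a b]).

Definition addS (A B : V -> Prop) : V -> Prop :=
  span_of (fun v => A v \/ B v).

Definition subsp (A B : V -> Prop) : Prop := forall v, A v -> B v.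

Definition is_ideal (I : V -> Prop) : Prop :=
  [/\ I 0, (forall (a : F) u v, I u -> I v -> I (a *: u + v)),
      subsp (brS I full) I & subsp (mulS I full) I].

(* ideal_pow I k = I^(k+1):  I^1 = I,
   I^(k+1) = [I^k, I, P, ..., P] + I^k . I *)
Fixpoint ideal_pow (I : V -> Prop) (k : nat) : V -> Prop :=
  match k with
  | 0 => I
  | k'.+1 => addS (brS (ideal_pow I k') I) (mulS (ideal_pow I k') I)
  end.

Definition nilpotent_ideal (I : V -> Prop) : Prop :=
  is_ideal I /\ exists k, forall v, ideal_pow I k v -> v = 0.

Definition is_Nil (N : V -> Prop) : Prop :=
  nilpotent_ideal N /\ forall J, nilpotent_ideal J -> subsp J N.

(* derived_series k = P^(k+1): P^(1) = P,
   P^(k+1) = [P^(k), P^(k), P, ..., P] + P^(k) . P^(k) *)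
Fixpoint derived_series (k : nat) : V -> Prop :=
  match k with
  | 0 => full
  | k'.+1 => addS (brS (derived_series k') (derived_series k'))
                  (mulS (derived_series k') (derived_series k'))
  end.

Definition solvable_alg : Prop :=
  exists k, forall v, derived_series k v -> v = 0.

End PoissonNLie.

(* Let N = Nil(P), with N^(m+1) = 0, and let d be a derivation.  N + d(N) is an ideal; we
   show it is nilpotent, so that it lies in N by maximality.  Extend scalars to
   P[t]/(t^M).  In characteristic 0, exp(td) = \sum_a t^a d^a/a! is an automorphism
   there, so N[t] and exp(td) N[t] are nilpotent ideals, and so is their sum: a product
   of 2m+1 of its elements has m+1 factors in one of the two.  For a, b in N the series
   t a + (exp(td) b - b) lies in that sum and equals t (a + d b) modulo t^2, so a product
   of s+1 elements of N + d(N) is the t^(s+1)-coefficient of a product of s+1 such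
   series, which vanishes for s = 2m. *)

From HB Require Import structures.
From mathcomp Require Import all_boot all_order all_algebra all_fingroup.
From mathcomp Require Import zify.
From Stdlib Require Import FunctionalExtensionality.
Set Implicit Arguments. Unset Strict Implicit. Unset Printing Implicit Defensive.
Import GRing.Theory.
Local Open Scope ring_scope.

Section Subspaces.
Variables (F : fieldType) (V : vectType F).

Definition subspace (T : V -> Prop) :=
  T 0 /\ forall (a : F) u v, T u -> T v -> T (a *: u + v).

Variable T : V -> Prop.
Hypothesis sT : subspace T.

Lemma subspace0 : T 0. Proof. by case: sT. Qed.

Lemma subspaceD u v : T u -> T v -> T (u + v).
Proof. by case: sT => _ H Tu Tv; have := H 1 u v Tu Tv; rewrite scale1r. Qed.

Lemma subspaceZ a u : T u -> T (a *: u).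
Proof. by case: sT => T0 H Tu; have := H a u 0 Tu T0; rewrite addr0. Qed.

Lemma subspaceN u : T u -> T (- u).
Proof. by move=> Tu; rewrite -scaleN1r; apply: subspaceZ. Qed.

Lemma subspaceB u v : T u -> T v -> T (u - v).
Proof. by move=> Tu Tv; apply: subspaceD => //; apply: subspaceN. Qed.

Lemma subspace_sum (I : Type) (s : seq I) (P : pred I) (f : I -> V) :
  (forall i, P i -> T (f i)) -> T (\sum_(i <- s | P i) f i).
Proof. by move=> Tf; elim/big_ind: _ => //; [exact: subspace0 | exact: subspaceD]. Qed.

Lemma span_of_min (S : V -> Prop) : (forall v, S v -> T v) ->
  forall v, span_of S v -> T v.
Proof.
move=> ST v [s [Ss vs]].
have vs' : v \in span (in_tuple s) by [].
rewrite (coord_span vs'); apply: subspace_sum => i _.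
by apply/subspaceZ/ST/Ss; rewrite mem_nth // size_tuple.
Qed.

End Subspaces.

Section Span.
Variables (F : fieldType) (V : vectType F).

Lemma subspace_span_of (S : V -> Prop) : subspace (span_of S).
Proof.
split; first by exists [::]; split => //; exact: mem0v.
move=> a u v [s [Ss us]] [s' [Ss' vs']]; exists (s ++ s'); split.
  by move=> w; rewrite mem_cat => /orP [] ?; [apply: Ss | apply: Ss'].
rewrite span_cat; apply: memvD; last exact: (subvP (addvSr _ _)).
by apply: memvZ; apply: (subvP (addvSl _ _)).
Qed.

Lemma span_of_gen (S : V -> Prop) v : S v -> span_of S v.
Proof.
move=> Sv; exists [:: v]; split; first by move=> u; rewrite inE => /eqP ->.
by apply: memv_span; rewrite inE.
Qed.

End Span.

Section LinearMaps.
Variables (F : fieldType) (V : vectType F) (f : V -> V).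
Hypothesis flin : linear f.

Lemma lin0 : f 0 = 0.
Proof.
have := flin 1 0 0; rewrite !scale1r addr0 => /eqP.
by rewrite -subr_eq0 opprD addrA subrr add0r oppr_eq0 => /eqP.
Qed.

Lemma linD u v : f (u + v) = f u + f v.
Proof. by have := flin 1 u v; rewrite !scale1r. Qed.

Lemma linZ a u : f (a *: u) = a *: f u.
Proof. by have := flin a u 0; rewrite !addr0 lin0 addr0. Qed.

Lemma lin_sum I (s : seq I) (P : pred I) (g : I -> V) :
  f (\sum_(i <- s | P i) g i) = \sum_(i <- s | P i) f (g i).
Proof. by elim/big_rec2: _ => [|i x y _ <-]; [exact: lin0 | exact: linD]. Qed.

End LinearMaps.

Section Multilinear.
Variables (F : fieldType) (V : vectType F) (r : nat).

Definition multilinear (g : ('I_r -> V) -> V) :=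
  forall (x : 'I_r -> V) i (a : F) u v,
    g (upd x i (a *: u + v)) = a *: g (upd x i u) + g (upd x i v).

Lemma upd_id (x : 'I_r -> V) i : upd x i (x i) = x.
Proof. by apply: functional_extensionality => k; rewrite /upd; case: eqP => // ->. Qed.

Lemma upd_upd (x : 'I_r -> V) i u v : upd (upd x i u) i v = upd x i v.
Proof. by apply: functional_extensionality => k; rewrite /upd; case: eqP. Qed.

Lemma upd_same (x : 'I_r -> V) i u : upd x i u i = u.
Proof. by rewrite /upd eqxx. Qed.

Lemma upd_other (x : 'I_r -> V) i j u : j != i -> upd x i u j = x j.
Proof. by rewrite /upd => /negbTE ->. Qed.

Variable g : ('I_r -> V) -> V.
Hypothesis glin : multilinear g.

Lemma multilinearD x i u v : g (upd x i (u + v)) = g (upd x i u) + g (upd x i v).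
Proof. by have := glin x i 1 u v; rewrite !scale1r. Qed.

Lemma multilinear0 x i : g (upd x i 0) = 0.
Proof.
have := multilinearD x i 0 0; rewrite addr0 => /eqP.
by rewrite -subr_eq0 opprD addrA subrr add0r oppr_eq0 => /eqP.
Qed.

Lemma multilinearZ x i a u : g (upd x i (a *: u)) = a *: g (upd x i u).
Proof. by rewrite -[a *: u]addr0 glin multilinear0 addr0. Qed.

Lemma multilinear_sum x i (I : Type) (s : seq I) (P : pred I) (f : I -> V) :
  g (upd x i (\sum_(j <- s | P j) f j)) = \sum_(j <- s | P j) g (upd x i (f j)).
Proof.
elim: s => [|a s IH]; first by rewrite !big_nil multilinear0.
by rewrite !big_cons; case: (P a) => //; rewrite multilinearD IH.
Qed.

Lemma multilinear_eq0 x i : x i = 0 -> g x = 0.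
Proof. by move=> xi0; rewrite -(upd_id x i) xi0 multilinear0. Qed.

End Multilinear.

Section MultilinearExpand.
Variables (F : fieldType) (V : vectType F) (r : nat) (g : ('I_r -> V) -> V).
Hypothesis glin : multilinear g.
Variables (T : finType) (t0 : T) (G : 'I_r -> T -> V).

Definition ffun_set (phi : {ffun 'I_r -> T}) (J : 'I_r) (t : T) : {ffun 'I_r -> T} :=
  [ffun i => if i == J then t else phi i].

Lemma ffun_set_supportE (J : 'I_r) t (phi : {ffun 'I_r -> T}) :
  [forall i : 'I_r, (J <= i)%N ==> (phi i == t0)] =
  [forall i : 'I_r, (J < i)%N ==> (ffun_set phi J t i == t0)] &&
  (ffun_set phi J t J == t) && (ffun_set (ffun_set phi J t) J t0 == phi).
Proof.
have eqJ (i : 'I_r) : (i == J) = (i == J :> nat) by [].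
have -> : ffun_set phi J t J == t by rewrite ffunE eqxx.
rewrite andbT; apply/forallP/andP => [H|[/forallP H1 /eqP H2] i].
  split.
    apply/forallP => i; apply/implyP => hi; rewrite ffunE eqJ gtn_eqF //.
    exact/(implyP (H i))/ltnW.
  apply/eqP/ffunP => i; rewrite !ffunE; case: (i =P J) => [->|] //.
  exact/esym/eqP/(implyP (H J)).
apply/implyP; rewrite leq_eqVlt => /orP [/eqP e|hi].
  have -> : i = J by apply/val_inj.
  by move/ffunP: H2 => /(_ J); rewrite !ffunE eqxx => <-.
by have := implyP (H1 i) hi; rewrite ffunE eqJ gtn_eqF.
Qed.

Lemma multilinear_expand_prefix j : (j <= r)%N -> forall x,
  g (fun i => if (i < j)%N then \sum_t G i t else x i) =
  \sum_(phi : {ffun 'I_r -> T} | [forall i : 'I_r, (j <= i)%N ==> (phi i == t0)])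
     g (fun i => if (i < j)%N then G i (phi i) else x i).
Proof.
elim: j => [|j IH] hj x.
  rewrite (big_pred1 [ffun => t0]); first by congr g; apply: functional_extensionality.
  move=> phi /=; apply/forallP/eqP => [H|-> i]; last by rewrite ffunE eqxx.
  by apply/ffunP => i; rewrite ffunE; apply/eqP; have := H i.
set J : 'I_r := Ordinal hj.
have eqJ (i : 'I_r) : (i == J) = (i == j :> nat) by [].
set y := fun i : 'I_r => if (i < j)%N then \sum_t G i t else x i.
have -> : (fun i : 'I_r => if (i < j.+1)%N then \sum_t G i t else x i) =
          upd y J (\sum_t G J t).
  apply: functional_extensionality => i; rewrite /upd /y ltnS leq_eqVlt.
  case: (i =P J) => [->|ne]; first by rewrite eqxx.
  by have -> : (i == j :> nat) = false by apply/negP => /eqP e; apply: ne; apply/val_inj.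
rewrite (multilinear_sum glin) (partition_big (fun psi : {ffun 'I_r -> T} => psi J) predT) //.
apply: eq_bigr => t _.
have -> : upd y J (G J t) = (fun i => if (i < j)%N then \sum_t G i t else upd x J (G J t) i).
  apply: functional_extensionality => i; rewrite /upd /y.
  by case: (i =P J) => [->|ne] //=; rewrite ltnn.
rewrite IH; last exact: ltnW.
rewrite [in RHS](reindex_onto (fun phi => ffun_set phi J t) (fun psi => ffun_set psi J t0)) /=; last first.
  move=> psi /andP [_ /eqP <-]; apply/ffunP => i; rewrite !ffunE.
  by case: (i =P J) => [->|].
apply: eq_big => phi; first exact: (ffun_set_supportE J).
move=> _; congr g; apply: functional_extensionality => i; rewrite ffunE /upd.
case: (ltngtP i j) => h; first by rewrite eqJ ltn_eqF // ltnS ltnW.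
  by rewrite eqJ gtn_eqF // ltnS leqNgt h.
have -> : i = J by apply/val_inj.
by rewrite eqxx /= ltnSn.
Qed.

Lemma multilinear_expand :
  g (fun i => \sum_t G i t) = \sum_(phi : {ffun 'I_r -> T}) g (fun i => G i (phi i)).
Proof.
have := multilinear_expand_prefix (leqnn r) (fun _ => 0).
have -> : (fun i : 'I_r => if (i < r)%N then \sum_t G i t else 0) = (fun i => \sum_t G i t).
  by apply: functional_extensionality => i; rewrite ltn_ord.
move=> ->; apply: eq_big => phi.
  by apply/forallP => i; apply/implyP; rewrite leqNgt ltn_ord.
by move=> _; congr g; apply: functional_extensionality => i; rewrite ltn_ord.
Qed.

End MultilinearExpand.

Section PoissonIdeals.
Variables (F : fieldType) (V : vectType F) (n : nat).
Variables (mul : V -> V -> V) (br : ('I_n -> V) -> V).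
Hypothesis Hp : poisson_nlie mul br.
Hypothesis n_gt1 : (1 < n)%N.

Definition slot0 : 'I_n := Ordinal (ltnW n_gt1).
Definition slot1 : 'I_n := Ordinal n_gt1.
Lemma pred_n_lt : (n.-1 < n)%N. Proof. by rewrite ltn_predL ltnW. Qed.
Definition slot_last : 'I_n := Ordinal pred_n_lt.

Lemma slot1_neq0 : slot1 != slot0. Proof. by []. Qed.

Lemma slot0_neq_last : slot0 != slot_last.
Proof. by rewrite -(inj_eq val_inj) /= eq_sym -lt0n -subn1 subn_gt0. Qed.

Lemma multilinear_br : multilinear br.
Proof. by move=> x i a u v; apply: (br_multilinear Hp). Qed.

Lemma upd_firstE (x : 'I_n -> V) w : upd_first x w = upd x slot0 w.
Proof. by apply: functional_extensionality => k. Qed.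

Lemma upd_lastE (x : 'I_n -> V) w : upd_last x w = upd x slot_last w.
Proof. by apply: functional_extensionality => k. Qed.

Lemma br_tperm (x : 'I_n -> V) (i j : 'I_n) : i != j ->
  br (fun k => x (tperm i j k)) = - br x.
Proof. by move=> ij; rewrite (br_skew Hp) odd_tperm ij expr1 scaleN1r. Qed.

Lemma br_closed_any_slot (I : V -> Prop) : subspace I ->
  (forall x, I (x slot0) -> I (br x)) -> forall x j, I (x j) -> I (br x).
Proof.
move=> sI I_br0 x j Ixj; have [ej | j0] := eqVneq j slot0; first by apply: I_br0; rewrite -ej.
rewrite -[br x]opprK -(@br_tperm x slot0 j); last by rewrite eq_sym.
by apply: subspaceN => //; apply: I_br0; rewrite tpermL.
Qed.

Let mulC u v : mul u v = mul v u. Proof. exact: (mul_comm Hp). Qed.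

Lemma mul_linr (a : F) u v w : mul w (a *: u + v) = a *: mul w u + mul w v.
Proof. by rewrite mulC (mul_linl Hp) (mulC u) (mulC v). Qed.

Lemma mul0l q : mul 0 q = 0.
Proof. by have := mul_linl Hp (-1) 0 0 q; rewrite scaler0 addr0 scaleN1r addNr. Qed.

Definition mul2 (x : 'I_2 -> V) : V := mul (x ord0) (x ord_max).

Lemma multilinear_mul2 : multilinear mul2.
Proof.
move=> x i a u v; rewrite /mul2 /upd.
case: (ord0 =P i) => [<-|ne0]; first by rewrite (mul_linl Hp).
have -> : ord_max = i.
  apply/val_inj; move: ne0; case: i => [[|[|k]] Hk] //= ne0.
  by exfalso; apply: ne0; apply/val_inj.
by rewrite eqxx mul_linr.
Qed.

Lemma subspace_preim_br (T : V -> Prop) x i : subspace T ->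
  subspace (fun v => T (br (upd x i v))).
Proof.
move=> [T0 Tl]; split; first by rewrite multilinear0 //; exact: multilinear_br.
by move=> a u v hu hv; rewrite multilinear_br; apply: Tl.
Qed.

Lemma subspace_preim_mul (T : V -> Prop) q : subspace T ->
  subspace (fun v => T (mul v q)).
Proof.
move=> [T0 Tl]; split; first by rewrite mul0l.
by move=> a u v hu hv; rewrite (mul_linl Hp); apply: Tl.
Qed.

Section Ideal.
Variable N : V -> Prop.
Hypothesis HN : is_ideal mul br N.

Lemma subspace_ideal : subspace N.
Proof. by case: HN => N0 Nl _ _; split. Qed.

Lemma ideal_br0 x : N (x slot0) -> N (br x).
Proof.
move=> Nx; case: HN => _ _ Hb _; apply/Hb/span_of_gen; exists x; split => //.
by move=> k hk; have -> : k = slot0 by apply/val_inj.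
Qed.

Lemma ideal_br x j : N (x j) -> N (br x).
Proof. exact: (br_closed_any_slot subspace_ideal ideal_br0). Qed.

Lemma ideal_mul u v : N u -> N (mul u v).
Proof. by move=> Nu; case: HN => _ _ _ Hm; apply/Hm/span_of_gen; exists u, v. Qed.

Local Notation IP := (ideal_pow mul br N).

Lemma subspace_ideal_pow k : subspace (IP k).
Proof. by case: k => [|k]; [exact: subspace_ideal | exact: subspace_span_of]. Qed.

Lemma ideal_pow_br_gen k y : IP k (y slot0) -> N (y slot1) -> IP k.+1 (br y).
Proof.
move=> h0 h1; apply/span_of_gen; left; apply/span_of_gen; exists y; split => //.
  by move=> j hj; have -> : j = slot0 by apply/val_inj.
by move=> j hj; have -> : j = slot1 by apply/val_inj.
Qed.

Lemma ideal_pow_mul_gen k u v : IP k u -> N v -> IP k.+1 (mul u v).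
Proof. by move=> hu hv; apply/span_of_gen; right; apply/span_of_gen; exists u, v. Qed.

Lemma ideal_pow_ind k (T : V -> Prop) : subspace T ->
  (forall y, IP k (y slot0) -> N (y slot1) -> T (br y)) ->
  (forall a b, IP k a -> N b -> T (mul a b)) -> forall v, IP k.+1 v -> T v.
Proof.
move=> sT Tbr Tmul v; apply: span_of_min => // w [].
  apply: span_of_min => // _ [y [h0 h1 ->]].
  by apply: Tbr; [apply: h0 | apply: h1].
by apply: span_of_min => // _ [a [b [ha hb ->]]]; apply: Tmul.
Qed.

Lemma ideal_pow_br k x : IP k (x slot0) -> IP k (br x).
Proof.
elim: k x => [|k IH]; first exact: ideal_br0.
have IH' := br_closed_any_slot (subspace_ideal_pow k) IH.
move=> x hx; rewrite -(upd_id x slot0); move: (x slot0) hx.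
apply: (ideal_pow_ind (T := fun v => IP k.+1 (br (upd x slot0 v)))).
- exact/subspace_preim_br/subspace_ideal_pow.
- move=> y y0 y1.
  set x' := fun k => x (tperm slot0 slot_last k).
  have -> : upd x slot0 (br y) = fun k => upd_last x' (br y) (tperm slot0 slot_last k).
    apply: functional_extensionality => j; rewrite upd_lastE /x' /upd tpermK.
    by rewrite -(inj_eq (@perm_inj _ (tperm slot0 slot_last))) tpermL.
  rewrite br_tperm ?slot0_neq_last // (br_fundamental Hp).
  apply/(subspaceN (subspace_ideal_pow _))/(subspace_sum (subspace_ideal_pow _)).
  move=> i _; rewrite upd_lastE.
  have [-> | i0] := eqVneq i slot0.
    apply: ideal_pow_br_gen; last by rewrite upd_other // slot1_neq0.
    by rewrite upd_same; apply: (IH' _ slot_last); rewrite upd_same.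
  have [-> | i1] := eqVneq i slot1.
    apply: ideal_pow_br_gen; first by rewrite upd_other // eq_sym slot1_neq0.
    by rewrite upd_same; apply: (ideal_br (j := slot_last)); rewrite upd_same.
  by apply: ideal_pow_br_gen; rewrite upd_other // eq_sym.
- move=> a b ha hb; rewrite -upd_firstE (br_leibniz Hp) !upd_firstE.
  apply: subspaceD; first exact: subspace_ideal_pow.
    by apply: ideal_pow_mul_gen => //; apply: ideal_br0; rewrite upd_same.
  by rewrite mulC; apply: ideal_pow_mul_gen => //; apply: IH; rewrite upd_same.
Qed.

Lemma ideal_pow_mul k u q : IP k u -> IP k (mul u q).
Proof.
elim: k u => [|k IH]; first by move=> u; apply: ideal_mul.
apply: (ideal_pow_ind (T := fun v => IP k.+1 (mul v q))).
- exact/subspace_preim_mul/subspace_ideal_pow.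
- move=> y y0 y1.
  have L := br_leibniz Hp y q (y slot0); rewrite !upd_firstE upd_id in L.
  have -> : mul (br y) q =
      br (upd y slot0 (mul q (y slot0))) - mul (y slot0) (br (upd y slot0 q)).
    by rewrite L mulC addrK.
  apply: subspaceB; first exact: subspace_ideal_pow.
    apply: ideal_pow_br_gen; last by rewrite upd_other // slot1_neq0.
    by rewrite upd_same mulC; apply: IH.
  apply: ideal_pow_mul_gen => //; apply: (ideal_br (j := slot1)).
  by rewrite upd_other // slot1_neq0.
- by move=> a b ha hb; rewrite -(mul_assoc Hp); apply: ideal_pow_mul_gen => //; exact: ideal_mul.
Qed.

(* [npow a] is N^a with N^0 = P, whereas [ideal_pow I k] is I^(k+1). *)
Definition npow (a : nat) : V -> Prop :=
  if a is a'.+1 then IP a' else (fun _ => True).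

Lemma subspace_npow a : subspace (npow a).
Proof. by case: a => [|a] //=; exact: subspace_ideal_pow. Qed.

Lemma npow_br a x : npow a (x slot0) -> npow a (br x).
Proof. by case: a => [|a] //=; apply: ideal_pow_br. Qed.

Lemma npow_mul a u v : npow a u -> npow a (mul u v).
Proof. by case: a => [|a] //=; apply: ideal_pow_mul. Qed.

Lemma npow_br_succ a x : npow a (x slot0) -> npow 1 (x slot1) -> npow a.+1 (br x).
Proof.
case: a => [|a] /= h0 h1; first exact: (ideal_br (j := slot1)).
exact: ideal_pow_br_gen.
Qed.

Lemma npow_mul_succ a u v : npow a u -> npow 1 v -> npow a.+1 (mul u v).
Proof.
case: a => [|a] /= hu hv; first by rewrite mulC; apply: ideal_mul.
exact: ideal_pow_mul_gen.
Qed.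

Lemma npow_mul2 a x : npow a (x ord0) -> npow a (mul2 x).
Proof. exact: npow_mul. Qed.

Lemma npow_mul2_succ a x : npow a (x ord0) -> npow 1 (x ord_max) -> npow a.+1 (mul2 x).
Proof. exact: npow_mul_succ. Qed.

Lemma npow_succ a v : npow a.+1 v -> npow a v.
Proof.
case: a => [|a] //=; apply: ideal_pow_ind; first exact: subspace_ideal_pow.
  by move=> y y0 _; apply: ideal_pow_br.
by move=> u w hu _; apply: ideal_pow_mul.
Qed.

Lemma npow_le a b v : (a <= b)%N -> npow b v -> npow a v.
Proof.
move=> /subnK <-; elim: (b - a)%N => [|k IH] //= h.
by apply/IH/npow_succ.
Qed.

End Ideal.
End PoissonIdeals.

Section ExpDerivation.
Variables (F : fieldType) (V : vectType F) (d : V -> V).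
Hypothesis dlin : linear d.
Hypothesis char0 : forall k : nat, (k%:R == 0 :> F) = (k == 0)%N.
Variable Mp : nat.
Local Notation M := Mp.+1.

Definition dpow (a : nat) (v : V) : V := (a`!%:R)^-1 *: iter a d v.

Lemma linear_dpow a : linear (dpow a).
Proof.
have iterd_lin : linear (iter a d) by elim: a => // a IH c u v /=; rewrite IH dlin.
by move=> c u v; rewrite /dpow iterd_lin scalerDr !scalerA mulrC.
Qed.

Lemma dpow0 v : dpow 0 v = v. Proof. by rewrite /dpow /= invr1 scale1r. Qed.

Lemma dpow1 v : dpow 1 v = d v. Proof. by rewrite /dpow /= invr1 scale1r. Qed.

Lemma d_dpow a v : d (dpow a v) = a.+1%:R *: dpow a.+1 v.
Proof.
rewrite /dpow (linZ dlin) scalerA factS natrM invfM mulrA mulfV ?mul1r //.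
by rewrite char0.
Qed.

Section MultiIndex.
Variable r : nat.

Definition msum (phi : {ffun 'I_r -> 'I_M}) : nat := (\sum_i (phi i : nat))%N.

Lemma leq_msum (phi : {ffun 'I_r -> 'I_M}) (i : 'I_r) : (phi i <= msum phi)%N.
Proof. by rewrite /msum (bigD1 i) //= leq_addr. Qed.

Definition ffun_incr (h : {ffun 'I_r -> 'I_M}) (i : 'I_r) : {ffun 'I_r -> 'I_M} :=
  [ffun l => if l == i then inord (h i).+1 else h l].
Definition ffun_decr (h : {ffun 'I_r -> 'I_M}) (i : 'I_r) : {ffun 'I_r -> 'I_M} :=
  [ffun l => if l == i then inord (h i).-1 else h l].

Lemma ffun_incr_at (h : {ffun 'I_r -> 'I_M}) i : ((h i).+1 < M)%N ->
  ffun_incr h i i = (h i).+1 :> nat.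
Proof. by move=> hM; rewrite ffunE eqxx inordK. Qed.

Lemma msum_incr (h : {ffun 'I_r -> 'I_M}) i : ((h i).+1 < M)%N ->
  msum (ffun_incr h i) = (msum h).+1.
Proof.
move=> hM; rewrite /msum (bigD1 i) //= [in RHS](bigD1 i) //= ffun_incr_at //.
rewrite addSn; congr (_.+1 + _)%N; apply: eq_bigr => l /negbTE hl.
by rewrite ffunE hl.
Qed.

Lemma ffun_incrK (h : {ffun 'I_r -> 'I_M}) i : ((h i).+1 < M)%N ->
  ffun_decr (ffun_incr h i) i = h.
Proof.
move=> hM; apply/ffunP => l; rewrite !ffunE; case: (l =P i) => [->|//].
by apply/val_inj; rewrite eqxx /= !inordK //= ltnW.
Qed.

Lemma ffun_decrK (h : {ffun 'I_r -> 'I_M}) i : (0 < h i)%N ->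
  ffun_incr (ffun_decr h i) i = h.
Proof.
move=> hi; apply/ffunP => l; rewrite !ffunE.
case: (l =P i) => [->|//]; rewrite eqxx; apply/val_inj.
have hp : ((h i).-1 < M)%N by apply: leq_ltn_trans (ltn_ord (h i)); apply: leq_pred.
by rewrite /= (inordK hp) prednK // inordK.
Qed.

(* A multi-index of weight j+1 with positive i-th entry is an increment of one of
   weight j. *)
Lemma sum_msum_incr (Phi : {ffun 'I_r -> 'I_M} -> V) i j : (j.+1 < M)%N ->
  \sum_(h | msum h == j) ((h i).+1%:R : F) *: Phi (ffun_incr h i) =
  \sum_(h | msum h == j.+1) ((h i)%:R : F) *: Phi h.
Proof.
move=> hj; rewrite [RHS](bigID (fun h : {ffun 'I_r -> 'I_M} => (0 < h i)%N)) /=.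
rewrite [X in _ = _ + X]big1 ?addr0; last first.
  by move=> h /andP [_]; rewrite -eqn0Ngt => /eqP ->; rewrite scale0r.
rewrite [RHS](reindex_onto (ffun_incr ^~ i) (ffun_decr ^~ i)) /=; last first.
  by move=> h /andP [_ hi]; apply: ffun_decrK.
have small h : msum h = j -> ((h i).+1 < M)%N.
  by move=> hs; apply: leq_ltn_trans hj; rewrite ltnS -hs leq_msum.
apply: eq_big => h; last by move=> /eqP /small hM; rewrite ffun_incr_at.
case: (ltnP (h i).+1 M) => hM.
  by rewrite ffun_incrK // msum_incr // eqSS ffun_incr_at // eqxx !andbT.
have hMp : (h i : nat) = Mp by apply/eqP; rewrite eqn_leq -ltnS ltn_ord.
have -> : (msum h == j) = false by apply/eqP => /small; rewrite hMp ltnn.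
apply/esym/negbTE; rewrite negb_and; apply/orP; right.
apply/negP => /eqP /ffunP /(_ i); rewrite !ffunE eqxx.
have -> : (inord (h i).+1 : 'I_M) = ord0.
  by apply/val_inj; rewrite /= /inord val_insubd ltnNge hM.
move=> /(congr1 val) /=; rewrite inordK // hMp => h0.
by move: hj; rewrite -h0.
Qed.

End MultiIndex.

(* A series [w : nat -> V] stands for \sum_k w k t^k in P[t]/(t^M); [expd w k] is the
   t^k-coefficient of exp(td) w, where [dpow a] is d^a/a!. *)
Definition expd (w : nat -> V) (k : nat) : V :=
  \sum_(a < M | (a <= k)%N) dpow a (w (k - a)%N).

Section Convolution.
Variables (r : nat) (g : ('I_r -> V) -> V).
Hypothesis glin : multilinear g.
Hypothesis gder : forall x, d (g x) = \sum_i g (upd x i (d (x i))).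

Lemma dpow_leibniz j : (j < M)%N -> forall x,
  dpow j (g x) = \sum_(h | msum h == j) g (fun i => dpow (h i) (x i)).
Proof.
elim: j => [|j IH] hj x.
  rewrite dpow0 (big_pred1 [ffun => ord0]).
    by congr g; apply: functional_extensionality => i; rewrite ffunE dpow0.
  move=> h; rewrite /= /msum sum_nat_eq0; apply/forallP/eqP => [H|-> i]; last by rewrite ffunE.
  by apply/ffunP => i; rewrite ffunE; apply/val_inj; have /eqP := H i.
apply: (@scalerI _ _ (j.+1%:R : F)); first by rewrite char0.
have hj' := ltnW hj.
rewrite -d_dpow IH // (lin_sum dlin).
under eq_bigr => h /eqP hs.
  rewrite gder; under eq_bigr => i _.
    have hi : ((h i).+1 < M)%N by apply: leq_ltn_trans hj; rewrite ltnS -hs leq_msum.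
    rewrite d_dpow (multilinearZ glin).
    have -> : upd (fun l => dpow (h l) (x l)) i (dpow (h i).+1 (x i)) =
              (fun l => dpow (ffun_incr h i l) (x l)).
      apply: functional_extensionality => l; rewrite /upd ffunE.
      by case: eqP => [->|] //; rewrite inordK.
    over.
  over.
rewrite exchange_big /= scaler_sumr.
under [RHS]eq_bigr => h /eqP hs.
  rewrite -hs natr_sum scaler_suml; over.
rewrite [RHS]exchange_big /=; apply: eq_bigr => i _.
exact: (sum_msum_incr (fun h => g (fun l => dpow (h l) (x l)))).
Qed.

(* [conv] extends [g] to series by the Cauchy product. *)
Definition conv (w : 'I_r -> nat -> V) (k : nat) : V :=
  \sum_(phi : {ffun 'I_r -> 'I_M} | msum phi == k) g (fun i => w i (phi i)).

Definition ffun_add (h phi : {ffun 'I_r -> 'I_M}) : {ffun 'I_r -> 'I_M} :=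
  [ffun i => inord (h i + phi i)%N].
Definition ffun_sub (h psi : {ffun 'I_r -> 'I_M}) : {ffun 'I_r -> 'I_M} :=
  [ffun i => inord (psi i - h i)%N].

Lemma msum_add (h phi : {ffun 'I_r -> 'I_M}) : (forall i, (h i + phi i < M)%N) ->
  msum (ffun_add h phi) = (msum h + msum phi)%N.
Proof.
by move=> H; rewrite /msum -big_split; apply: eq_bigr => i _; rewrite ffunE inordK.
Qed.

Section ExpConv.
Variables (c : 'I_r -> nat -> V) (k : nat).
Hypothesis k_lt : (k < M)%N.

Let term (h phi : {ffun 'I_r -> 'I_M}) := g (fun i => dpow (h i) (c i (phi i))).

Lemma expd_conv_double :
  expd (conv c) k = \sum_h \sum_(phi | (msum h + msum phi == k)%N) term h phi.
Proof.
rewrite /expd /conv.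
under eq_bigr => a _.
  rewrite (lin_sum (linear_dpow a)).
  under eq_bigr => phi _ do rewrite dpow_leibniz //.
  rewrite exchange_big; over.
rewrite (exchange_big_dep predT) //=; apply: eq_bigr => h _.
case: (leqP (msum h) k) => hh.
  have hM : (msum h < M)%N by apply: leq_ltn_trans k_lt.
  rewrite (big_pred1 (Ordinal hM)); last first.
    move=> a /=; apply/andP/eqP => [[_ /eqP ha]|->]; first exact/val_inj.
    by rewrite eqxx.
  apply: eq_bigl => phi; apply/eqP/eqP => [->|<-]; first by rewrite subnKC.
  by rewrite addKn.
rewrite big_pred0; last by move=> a; apply/andP => [[ha /eqP e]]; move: hh; rewrite e ltnNge ha.
rewrite big_pred0 // => phi; apply/negP => /eqP e.
by move: hh; rewrite -e ltnNge leq_addr.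
Qed.

Lemma multilinear_expd (psi : {ffun 'I_r -> 'I_M}) :
  g (fun i => expd (c i) (psi i)) =
  \sum_(h : {ffun 'I_r -> 'I_M} | [forall i, (h i <= psi i)%N]) g (fun i => dpow (h i) (c i (psi i - h i)%N)).
Proof.
have -> : (fun i => expd (c i) (psi i)) =
    (fun i => \sum_(a < M) (if (a <= psi i)%N then dpow a (c i (psi i - a)%N) else 0)).
  by apply: functional_extensionality => i; rewrite /expd big_mkcond.
rewrite (multilinear_expand glin ord0) [RHS]big_mkcond; apply: eq_bigr => h _.
case: (boolP [forall i, (h i <= psi i)%N]) => [/forallP H|/forallPn [i hi]].
  by congr g; apply: functional_extensionality => i; rewrite H.
by apply: (multilinear_eq0 glin (i := i)); rewrite (negbTE hi).
Qed.

Lemma conv_expd_double :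
  conv (fun i => expd (c i)) k =
  \sum_h \sum_(phi | (msum h + msum phi == k)%N) term h phi.
Proof.
rewrite /conv; under eq_bigr => psi _ do rewrite multilinear_expd.
rewrite (exchange_big_dep predT) //=; apply: eq_bigr => h _.
rewrite (reindex_onto (ffun_add h) (ffun_sub h)) /=; last first.
  move=> psi /andP [_ /forallP H]; apply/ffunP => i; rewrite !ffunE.
  have e1 : (psi i - h i < M)%N by apply: leq_ltn_trans (ltn_ord (psi i)); apply: leq_subr.
  by rewrite (inordK e1) subnKC ?H // inord_val.
have small phi : (msum h + msum phi == k)%N -> forall i, (h i + phi i < M)%N.
  move=> /eqP e i; apply: leq_ltn_trans k_lt; rewrite -e.
  by apply: leq_add; apply: leq_msum.
apply: eq_big => phi.
  apply/andP/idP => [[/andP [/eqP hs _] /eqP hsub]|hs].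
    suff H : forall i, (h i + phi i < M)%N by rewrite -msum_add // hs.
    move=> i; rewrite ltnNge; apply/negP => hge.
    move/ffunP: hsub => /(_ i); rewrite !ffunE.
    have -> : (inord (h i + phi i)%N : 'I_M) = ord0.
      by apply/val_inj; rewrite /= /inord val_insubd ltnNge hge.
    rewrite /= sub0n => /(congr1 val); rewrite /= inordK // => e.
    by move: hge; rewrite -e addn0 ltnNge -ltnS ltn_ord.
  have H := small _ hs; split.
    rewrite msum_add // hs /=; apply/forallP => i; rewrite ffunE inordK //.
    exact: leq_addr.
  by apply/eqP/ffunP => i; rewrite !ffunE (inordK (H i)) addKn inord_val.
move=> /andP [_ /eqP hsub]; rewrite /term; congr g.
apply: functional_extensionality => i; congr (dpow _ (c i _)).
move/ffunP: hsub => /(_ i); rewrite [X in X = _]ffunE => /(congr1 val).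
rewrite /= inordK //; apply: leq_ltn_trans (ltn_ord (ffun_add h phi i)); exact: leq_subr.
Qed.

End ExpConv.

Lemma expd_conv c k : (k < M)%N -> expd (conv c) k = conv (fun i => expd (c i)) k.
Proof. by move=> hk; rewrite expd_conv_double // conv_expd_double. Qed.

End Convolution.

Section ExpInverse.
Variable w : nat -> V.

(* The inverse of exp(td), solved coefficient by coefficient; [expd_inv] reads off the
   diagonal. *)
Fixpoint expd_pre (k : nat) : nat -> V :=
  match k with
  | 0 => w
  | k'.+1 => fun j => if j == k'.+1 then
       w j - \sum_(a < M | (0 < a <= j)%N) dpow a (expd_pre k' (j - a)%N)
     else expd_pre k' j
  end.

Definition expd_inv (j : nat) : V := expd_pre j j.

Lemma expd_pre_stable k j : (j <= k)%N -> expd_pre k j = expd_inv j.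
Proof.
elim: k => [|k IH] hj; first by move: hj; rewrite leqn0 => /eqP ->.
have [-> //|ne] := eqVneq j k.+1.
by rewrite /= (negbTE ne); apply: IH; rewrite -ltnS ltn_neqAle ne hj.
Qed.

Lemma expd_inv_recE k : expd_inv k.+1 =
  w k.+1 - \sum_(a < M | (0 < a <= k.+1)%N) dpow a (expd_inv (k.+1 - a)%N).
Proof.
rewrite {1}/expd_inv /= eqxx; congr (_ - _); apply: eq_bigr => a /andP [ha _].
by rewrite expd_pre_stable //; lia.
Qed.

Lemma expd_invK k : expd expd_inv k = w k.
Proof.
rewrite /expd (bigD1 ord0) //= subn0 dpow0.
case: k => [|k].
  rewrite big_pred0 ?addr0 // => a; rewrite leqn0; apply/andP => [[/eqP e ne]].
  by move: ne; rewrite -(inj_eq val_inj) /= e eqxx.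
rewrite expd_inv_recE -[RHS](subrK (\sum_(a < M | (0 < a <= k.+1)%N)
  dpow a (expd_inv (k.+1 - a)%N))); congr (_ + _); apply: eq_bigl => a.
by rewrite -(inj_eq val_inj) /= andbC lt0n.
Qed.

End ExpInverse.

Definition lcomb (x : F) (u v : nat -> V) : nat -> V := fun k => x *: u k + v k.

Lemma expd_lcomb x u v k : expd (lcomb x u v) k = x *: expd u k + expd v k.
Proof.
rewrite /expd scaler_sumr -big_split; apply: eq_bigr => a _.
by rewrite /lcomb linear_dpow.
Qed.

Lemma expd0 k : expd (fun _ => 0) k = 0.
Proof. by rewrite /expd big1 // => a _; rewrite (lin0 (linear_dpow a)). Qed.

Definition cst (b : V) : nat -> V := fun k => if k == 0%N then b else 0.

Lemma expd_cst b k : (k < M)%N -> expd (cst b) k = dpow k b.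
Proof.
move=> hk; rewrite /expd (bigD1 (Ordinal hk)) //= subnn /cst eqxx big1 ?addr0 //.
move=> a /andP [ha ne]; have -> : ((k - a)%N == 0%N) = false.
  apply/negbTE; rewrite subn_eq0 -ltnNge ltn_neqAle ha andbT.
  by apply: contra ne => /eqP e; apply/eqP/val_inj.
exact: (lin0 (linear_dpow _)).
Qed.

Definition updf r (w : 'I_r -> nat -> V) (i : 'I_r) (u : nat -> V) : 'I_r -> nat -> V :=
  fun l => if l == i then u else w l.

Lemma updf_comm r (w : 'I_r -> nat -> V) i j u v : i != j ->
  updf (updf w i u) j v = updf (updf w j v) i u.
Proof.
move=> ij; apply: functional_extensionality => l; rewrite /updf.
by case: (l =P j) => [->|//]; rewrite eq_sym (negbTE ij).
Qed.

Section Filtration.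
Variable lev : nat -> V -> Prop.
Hypothesis subspace_lev : forall a, subspace (lev a).
Hypothesis lev0 : forall v, lev 0 v.

(* [exp_level a] is exp(td) applied to series with coefficients in [lev a];
   [sum_level L] is the filtration of the sum of the two filtered ideals [lev] and
   exp(td) [lev]. *)
Definition exp_level a (f : nat -> V) := exists c : nat -> V,
  (forall k, lev a (c k)) /\ forall k, (k < M)%N -> f k = expd c k.
Definition coef_level b (f : nat -> V) := forall k, (k < M)%N -> lev b (f k).
Definition sum_level L (h : nat -> V) := exists fs : nat -> nat -> V,
  (forall k, (k < M)%N -> h k = \sum_(a < L.+1) fs a k) /\
  forall a, (a <= L)%N -> exp_level a (fs a) /\ coef_level (L - a) (fs a).

Lemma exp_level_lcomb a x u v : exp_level a u -> exp_level a v -> exp_level a (lcomb x u v).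
Proof.
move=> [cu [hu eu]] [cv [hv ev]]; exists (lcomb x cu cv); split.
  by move=> k; apply: (subspace_lev a).2.
by move=> k hk; rewrite expd_lcomb /lcomb eu // ev.
Qed.

Lemma exp_level0 a : exp_level a (fun _ => 0).
Proof. by exists (fun _ => 0); split => [k|k _]; [exact: subspace0 | rewrite expd0]. Qed.

Lemma exp_level_any f : exp_level 0 f.
Proof. by exists (expd_inv f); split => // k _; rewrite expd_invK. Qed.

Lemma coef_level_lcomb b x u v : coef_level b u -> coef_level b v -> coef_level b (lcomb x u v).
Proof. by move=> hu hv k hk; apply: (subspace_lev b).2; [apply: hu | apply: hv]. Qed.

Lemma coef_level0 b : coef_level b (fun _ => 0).
Proof. by move=> k _; exact: subspace0. Qed.

Lemma sum_level_lcomb L x u v : sum_level L u -> sum_level L v -> sum_level L (lcomb x u v).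
Proof.
move=> [fu [su hu]] [fv [sv hv]]; exists (fun a => lcomb x (fu a) (fv a)); split.
  by move=> k hk; rewrite /lcomb su // sv // scaler_sumr -big_split.
move=> a ha; have [A1 B1] := hu a ha; have [A2 B2] := hv a ha.
by split; [apply: exp_level_lcomb | apply: coef_level_lcomb].
Qed.

Lemma sum_level0 L : sum_level L (fun _ => 0).
Proof.
exists (fun _ _ => 0); split; first by move=> k _; rewrite big1.
by move=> a _; split; [exact: exp_level0 | exact: coef_level0].
Qed.

Definition lead_level s (v : V) := exists h, sum_level s.+1 h /\
  (forall k, (k < s.+1)%N -> h k = 0) /\ h s.+1 = v.

Lemma subspace_lead_level s : subspace (lead_level s).
Proof.
split; first by exists (fun _ => 0); split; [exact: sum_level0 | split].
move=> x u v [hu [Hu [zu vu]]] [hv [Hv [zv vv]]]; exists (lcomb x hu hv); split.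
  exact: sum_level_lcomb.
split; last by rewrite /lcomb vu vv.
by move=> k hk; rewrite /lcomb zu // zv // scaler0 addr0.
Qed.


Section Slots.
Variables (r : nat) (g : ('I_r -> V) -> V).
Hypothesis glin : multilinear g.
Hypothesis gder : forall x, d (g x) = \sum_i g (upd x i (d (x i))).
Variables (s0 s1 : 'I_r).
Hypothesis s10 : s1 != s0.
Hypothesis lev_g : forall a x, lev a (x s0) -> lev a (g x).
Hypothesis lev_g_succ : forall a x, lev a (x s0) -> lev 1 (x s1) -> lev a.+1 (g x).

Local Notation conv := (conv g).

Lemma updf_pointwise (w : 'I_r -> nat -> V) i u (phi : {ffun 'I_r -> 'I_M}) :
  (fun l => updf w i u l (phi l)) = upd (fun l => w l (phi l)) i (u (phi i)).
Proof. by apply: functional_extensionality => l; rewrite /upd /updf; case: eqP => [->|]. Qed.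

Lemma conv_updf_lcomb w i x u v k :
  conv (updf w i (lcomb x u v)) k = x *: conv (updf w i u) k + conv (updf w i v) k.
Proof.
by rewrite /conv scaler_sumr -big_split; apply: eq_bigr => phi _; rewrite !updf_pointwise glin.
Qed.

Lemma conv_updf_sum w i L (f : nat -> nat -> V) k :
  conv (updf w i (fun k => \sum_(a < L) f a k)) k = \sum_(a < L) conv (updf w i (f a)) k.
Proof.
rewrite /conv exchange_big /=; apply: eq_bigr => phi _.
by rewrite updf_pointwise (multilinear_sum glin); apply: eq_bigr => a _; rewrite updf_pointwise.
Qed.

Lemma eq_conv w w' k : (forall i k, (k < M)%N -> w i k = w' i k) -> conv w k = conv w' k.
Proof.
move=> H; apply: eq_bigr => phi _; congr g.
by apply: functional_extensionality => i; apply: H.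
Qed.

Lemma exp_level_conv_succ a w :
  exp_level a (w s0) -> exp_level 1 (w s1) -> exp_level a.+1 (conv w).
Proof.
move=> [c0 [l0 e0]] [c1 [l1 e1]].
pose c i := if i == s0 then c0 else if i == s1 then c1 else expd_inv (w i).
exists (conv c); split.
  move=> k; apply: subspace_sum; first exact: subspace_lev.
  by move=> phi _; apply: lev_g_succ; rewrite /c ?eqxx ?(negbTE s10).
move=> k hk; rewrite expd_conv //; apply: eq_conv => i j hj.
rewrite /c; case: (i =P s0) => [->|_]; first by rewrite e0.
by case: (i =P s1) => [->|_]; [rewrite e1 | rewrite expd_invK].
Qed.

Lemma exp_level_conv a w : exp_level a (w s0) -> exp_level a (conv w).
Proof.
move=> [c0 [l0 e0]].
pose c i := if i == s0 then c0 else expd_inv (w i).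
exists (conv c); split.
  move=> k; apply: subspace_sum; first exact: subspace_lev.
  by move=> phi _; apply: lev_g; rewrite /c eqxx.
move=> k hk; rewrite expd_conv //; apply: eq_conv => i j hj.
by rewrite /c; case: (i =P s0) => [->|_]; [rewrite e0 | rewrite expd_invK].
Qed.

Lemma coef_level_conv_succ b w :
  coef_level b (w s0) -> coef_level 1 (w s1) -> coef_level b.+1 (conv w).
Proof.
move=> h0 h1 k hk; apply: subspace_sum; first exact: subspace_lev.
move=> phi /eqP hs; have le_k i : (phi i < M)%N.
  by apply: leq_ltn_trans hk; rewrite -hs leq_msum.
by apply: lev_g_succ; [apply: h0 | apply: h1].
Qed.

Lemma coef_level_conv b w : coef_level b (w s0) -> coef_level b (conv w).
Proof.
move=> h0 k hk; apply: subspace_sum; first exact: subspace_lev.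
move=> phi /eqP hs; apply/lev_g/h0.
by apply: leq_ltn_trans hk; rewrite -hs leq_msum.
Qed.

Definition updf2 q u u' := updf (updf q s0 u) s1 u'.

Lemma updf2_s0 q u u' : updf2 q u u' s0 = u.
Proof. by rewrite /updf2 /updf eq_sym (negbTE s10) eqxx. Qed.

Lemma updf2_s1 q u u' : updf2 q u u' s1 = u'.
Proof. by rewrite /updf2 /updf eqxx. Qed.

Lemma conv_updf2_coef_succ a b q u u' :
  exp_level a u -> coef_level b u -> coef_level 1 u' ->
  exp_level a (conv (updf2 q u u')) /\ coef_level b.+1 (conv (updf2 q u u')).
Proof.
move=> ea cb c1; split; first by apply: exp_level_conv; rewrite updf2_s0.
by apply: coef_level_conv_succ; rewrite ?updf2_s0 ?updf2_s1.
Qed.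

Lemma conv_updf2_exp_succ a b q u u' :
  exp_level a u -> coef_level b u -> exp_level 1 u' ->
  exp_level a.+1 (conv (updf2 q u u')) /\ coef_level b (conv (updf2 q u u')).
Proof.
move=> ea cb e1; split; first by apply: exp_level_conv_succ; rewrite ?updf2_s0 ?updf2_s1.
by apply: coef_level_conv; rewrite updf2_s0.
Qed.

Lemma sum_level_conv L q h h' :
  sum_level L h -> sum_level 1 h' -> sum_level L.+1 (conv (updf2 q h h')).
Proof.
move=> [fs [hs hfs]] [fs' [hs' hfs']].
pose f0 := fs' 0%N; pose f1 := fs' 1%N.
have [A0 B0] := hfs' 0%N isT; have [A1 B1] := hfs' 1%N isT.
pose G0 c k := if (c <= L)%N then conv (updf2 q (fs c) f0) k else 0.
pose G1 c k := if (0 < c)%N then conv (updf2 q (fs c.-1) f1) k else 0.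
exists (fun c => lcomb 1 (G0 c) (G1 c)); split.
  move=> k hk.
  rewrite (eq_conv (w' := updf2 q (fun k => \sum_(a < L.+1) fs a k) (lcomb 1 f0 f1))); last first.
    move=> i j hj; rewrite /updf2 /updf; case: (i =P s1) => _.
      by rewrite hs' // /lcomb scale1r big_ord_recr big_ord1.
    by case: (i =P s0) => _ //; rewrite hs.
  have updf2_swap u u' : updf2 q u u' = updf (updf q s1 u') s0 u by rewrite /updf2 updf_comm // eq_sym.
  rewrite updf2_swap conv_updf_sum.
  under eq_bigr => a _ do rewrite -updf2_swap /updf2 conv_updf_lcomb scale1r.
  rewrite big_split /lcomb big_split /=; under [in RHS]eq_bigr => a _ do rewrite scale1r.
  rewrite [X in _ = X + _]big_ord_recr [X in _ = _ + X]big_ord_recl /=.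
  rewrite /G0 /G1 ltnn addr0 add0r; congr (_ + _); apply: eq_bigr => a _ //=.
  by rewrite -ltnS ltn_ord.
move=> c hc.
have [E0 C0] : exp_level c (G0 c) /\ coef_level (L.+1 - c) (G0 c).
  rewrite /G0; case: leqP => hcL /=; last by split; [exact: exp_level0 | exact: coef_level0].
  by rewrite subSn //; have [ea cb] := hfs c hcL; exact: conv_updf2_coef_succ ea cb B0.
have [E1 C1] : exp_level c (G1 c) /\ coef_level (L.+1 - c) (G1 c).
  rewrite /G1; case: c hc {E0 C0} => [|a] hc /=; first by split; [exact: exp_level0 | exact: coef_level0].
  have [ea cb] : exp_level a (fs a) /\ coef_level (L - a) (fs a) by apply: hfs; lia.
  by rewrite subSS; exact: conv_updf2_exp_succ ea cb A1.
by split; [apply: exp_level_lcomb | apply: coef_level_lcomb].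
Qed.

Lemma msum_split (phi : {ffun 'I_r -> 'I_M}) :
  msum phi = (phi s0 + phi s1 + \sum_(i | (i != s0) && (i != s1)) phi i)%N.
Proof. by rewrite /msum (bigD1 s0) //= (bigD1 s1) /= ?s10 // addnA. Qed.

Section LowestTerm.
Variables (a : nat) (w : 'I_r -> nat -> V).
Hypothesis w0_low : forall k, (k < a)%N -> w s0 k = 0.
Hypothesis w1_low : w s1 0%N = 0.
Hypothesis w_const : forall i, i != s0 -> i != s1 -> forall k, (0 < k)%N -> w i k = 0.

Definition lowest_index (i : 'I_r) : nat := if i == s0 then a else if i == s1 then 1%N else 0%N.

Lemma conv_term_eq0 (phi : {ffun 'I_r -> 'I_M}) :
  [|| (phi s0 < a)%N, (phi s1 == 0 :> nat) |
      [exists i, [&& i != s0, i != s1 & (0 < phi i)%N]]] ->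
  g (fun i => w i (phi i)) = 0.
Proof.
case/or3P => [h|/eqP h|/existsP [i /and3P [h1 h2 h3]]].
- by apply: (multilinear_eq0 glin (i := s0)); apply: w0_low.
- by apply: (multilinear_eq0 glin (i := s1)); rewrite h.
- by apply: (multilinear_eq0 glin (i := i)); apply: w_const.
Qed.

Lemma conv_low_eq0 k : (k <= a)%N -> conv w k = 0.
Proof.
move=> hk; apply: big1 => phi /eqP hs; apply: conv_term_eq0.
case: (ltnP (phi s0) a) => //= h0; case: eqP => //= h1; exfalso.
have : (a.+1 <= k)%N.
  rewrite -hs msum_split -addn1 -addnA leq_add // (leq_trans _ (leq_addr _ _)) //.
  by rewrite lt0n; apply/eqP.
by rewrite ltnNge hk.
Qed.

Lemma conv_low_lead : (a.+1 < M)%N -> conv w a.+1 = g (fun i => w i (lowest_index i)).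
Proof.
move=> hM.
pose ps := [ffun i => inord (lowest_index i) : 'I_M].
have vps i : (ps i : nat) = lowest_index i.
  rewrite ffunE inordK // /lowest_index; case: ifP => _; first exact: ltnW.
  by case: ifP => _ //; apply: leq_ltn_trans hM.
rewrite /conv (bigD1 ps) /=; last first.
  rewrite msum_split !vps /lowest_index eqxx (negbTE s10) eqxx big1 ?addn0 ?addn1 //.
  by move=> i /andP [h1 h2]; rewrite vps /lowest_index (negbTE h1) (negbTE h2).
rewrite big1 ?addr0; last first.
  move=> phi /andP [/eqP hs ne]; apply: conv_term_eq0.
  case: (ltnP (phi s0) a) => //= h0; case: eqP => //= h1.
  case: existsP => // hex; exfalso; apply: (negP ne).
  have H i : i != s0 -> i != s1 -> (phi i : nat) = 0%N.
    move=> h2 h3; apply/eqP; rewrite -leqn0 leqNgt; apply/negP => h4.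
    by apply: hex; exists i; rewrite h2 h3 h4.
  move: hs; rewrite msum_split big1 => [hs|i /andP []]; last exact: H.
  apply/eqP/ffunP => i; apply: val_inj; rewrite /= vps /lowest_index.
  case: (i =P s0) => [->|/eqP n0]; first by lia.
  by case: (i =P s1) => [->|/eqP n1]; [lia | apply: H].
by congr g; apply: functional_extensionality => i; rewrite vps.
Qed.

End LowestTerm.

Lemma lead_level_step s u v x : lead_level s u -> lead_level 0 v -> (s.+2 < M)%N ->
  x s0 = u -> x s1 = v -> lead_level s.+1 (g x).
Proof.
move=> [h [Hh [zh vh]]] [h' [Hh' [zh' vh']]] hM xu xv.
pose q := fun (i : 'I_r) (k : nat) => if k == 0%N then x i else 0.
exists (conv (updf2 q h h')); split; first exact: sum_level_conv.
have H0 k : (k < s.+1)%N -> updf2 q h h' s0 k = 0 by move=> hk; rewrite updf2_s0 zh.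
have H1 : updf2 q h h' s1 0%N = 0 by rewrite updf2_s1 zh'.
have H2 i : i != s0 -> i != s1 -> forall k, (0 < k)%N -> updf2 q h h' i k = 0.
  by move=> n0 n1 [|k] //; rewrite /updf2 /updf (negbTE n0) (negbTE n1).
split; first by move=> k hk; apply: (conv_low_eq0 H0 H1 H2); rewrite -ltnS.
rewrite (conv_low_lead H0 H1 H2) //; congr g; apply: functional_extensionality => i.
rewrite /lowest_index; have [-> |n0] := eqVneq i s0; first by rewrite updf2_s0 vh.
have [-> |n1] := eqVneq i s1; first by rewrite updf2_s1 vh'.
by rewrite /updf2 /updf (negbTE n0) (negbTE n1).
Qed.

End Slots.

(* The series t a + (exp(td) b - b) has leading coefficient a + d b. *)
Lemma lead_level_base a b : (1 < M)%N -> lev 1 a -> lev 1 b -> lead_level 0 (a + d b).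
Proof.
move=> hM la lb.
have lcst k : lev 1 (cst b k) by rewrite /cst; case: eqP => _ //; exact: subspace0.
pose h k := (if k == 1%N then a else 0) + (expd (cst b) k - cst b k).
exists h; split.
  exists (fun l => if l == 0%N then (fun k => (if k == 1%N then a else 0) - cst b k)
                   else expd (cst b)); split.
    by move=> k hk; rewrite big_ord_recr big_ord1 /= /h addrA addrAC.
  case=> [|[|l]] // _; split.
  - exact: exp_level_any.
  - move=> k _; apply: subspaceB => //; case: eqP => _ //; exact: subspace0.
  - by exists (cst b).
  - by move=> k _; apply: lev0.
split.
  by move=> k; rewrite ltnS leqn0 => /eqP ->; rewrite /h expd_cst // dpow0 subrr addr0.
by rewrite /h /= expd_cst // dpow1 /cst /= subr0.
Qed.

Lemma lead_level_eq0 m v : (forall u, lev m.+1 u -> u = 0) ->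
  (forall a b u, (a <= b)%N -> lev b u -> lev a u) ->
  ((m + m).+1 < M)%N -> lead_level (m + m) v -> v = 0.
Proof.
move=> lm lle hM [h [[fs [hs hfs]] [_ <-]]].
rewrite hs // big1 // => al _.
have hal : (al <= (m + m).+1)%N by rewrite -ltnS ltn_ord.
have [[c [lc ec]] B] := hfs al hal.
case: (ltnP m al) => hma.
  rewrite ec // /expd big1 // => i _.
  by rewrite (lm (c _)) ?(lin0 (linear_dpow _)) //; apply: (lle _ al).
by apply/lm/(lle _ ((m + m).+1 - al)%N); [lia | apply: B].
Qed.

End Filtration.
End ExpDerivation.

Section DerivationImage.
Variables (F : fieldType) (V : vectType F) (n : nat).
Variables (mul : V -> V -> V) (br : ('I_n -> V) -> V).
Hypothesis Hp : poisson_nlie mul br.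
Hypothesis n_gt1 : (1 < n)%N.
Variable N : V -> Prop.
Hypothesis HN : is_ideal mul br N.
Variable d : V -> V.
Hypothesis dder : derivation mul br d.

Lemma d_mul2 : (forall u v, d (mul u v) = mul (d u) v + mul u (d v)) ->
  forall x, d (mul2 mul x) = \sum_i mul2 mul (upd x i (d (x i))).
Proof.
move=> dmul x; rewrite big_ord_recr big_ord1 /= /mul2 dmul.
have -> : widen_ord (leqnSn 1) ord0 = ord0 :> 'I_2 by apply/val_inj.
by rewrite !upd_same !upd_other.
Qed.

Definition ideal_add_image : V -> Prop := fun w => exists a b, [/\ N a, N b & w = a + d b].

Let sN := subspace_ideal HN.
Let dlin : linear d. Proof. by case: dder. Qed.

Lemma subspace_ideal_add_image : subspace ideal_add_image.
Proof.
split; first by exists 0, 0; rewrite (lin0 dlin) addr0; split => //; exact: subspace0.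
move=> c u w [a1 [b1 [ha1 hb1 ->]]] [a2 [b2 [ha2 hb2 ->]]].
exists (c *: a1 + a2), (c *: b1 + b2); split; try exact: sN.2.
by rewrite dlin scalerDr addrACA.
Qed.

Let sR := subspace_ideal_add_image.

Lemma ideal_add_image_br x : ideal_add_image (x (slot0 n_gt1)) -> ideal_add_image (br x).
Proof.
case: dder => _ _ dbr; set i0 := slot0 n_gt1; move=> [a [b [ha hb ex]]].
rewrite -(upd_id x i0) ex (multilinearD (multilinear_br Hp)).
set y := upd x i0 b.
have := dbr y; rewrite (bigD1 i0) //= /y upd_same upd_upd => dy.
have -> : br (upd x i0 (d b)) = d (br y) - \sum_(i | i != i0) br (upd y i (d (y i))).
  by rewrite dy addrK.
exists (br (upd x i0 a) - \sum_(i | i != i0) br (upd y i (d (y i)))), (br y).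
split; last by rewrite addrA [_ - _ + _]addrAC.
- apply: subspaceB => //; first by apply: (ideal_br Hp n_gt1 HN (j := i0)); rewrite upd_same.
  apply: subspace_sum => // i ni; apply: (ideal_br Hp n_gt1 HN (j := i0)).
  by rewrite upd_other 1?eq_sym // /y upd_same.
- by apply: (ideal_br Hp n_gt1 HN (j := i0)); rewrite /y upd_same.
Qed.

Lemma ideal_add_image_mul u q : ideal_add_image u -> ideal_add_image (mul u q).
Proof.
case: dder => _ dmul _; move=> [a [b [ha hb ->]]].
have mulD w w' : mul (w + w') q = mul w q + mul w' q.
  by have := mul_linl Hp 1 w w' q; rewrite !scale1r.
rewrite mulD; have -> : mul (d b) q = d (mul b q) - mul b (d q) by rewrite dmul addrK.
exists (mul a q - mul b (d q)), (mul b q); split; last by rewrite addrA [_ - _ + _]addrAC.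
- by apply: subspaceB => //; apply: (ideal_mul HN).
- exact: (ideal_mul HN).
Qed.

Lemma is_ideal_ideal_add_image : is_ideal mul br ideal_add_image.
Proof.
split; [exact: sR.1 | exact: sR.2 | |].
  apply: span_of_min => // _ [z [hz0 _ ->]].
  by apply: ideal_add_image_br; apply: hz0.
by apply: span_of_min => // _ [u [q [hu _ ->]]]; apply: ideal_add_image_mul.
Qed.

Section Nilpotent.
Hypothesis char0 : forall k : nat, (k%:R == 0 :> F) = (k == 0)%N.
Variable m : nat.
Hypothesis N_nil : forall v, ideal_pow mul br N m v -> v = 0.

Local Notation lev := (npow mul br N).
Local Notation Mp := (m + m).+1.
Local Notation lead_level := (lead_level d Mp lev).

Let subspace_lev a : subspace (lev a) := subspace_npow HN a.
Let lev0 v : lev 0 v := I.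

Lemma lead_level_add_image w : ideal_add_image w -> lead_level 0 w.
Proof. by move=> [a [b [ha hb ->]]]; apply: (lead_level_base dlin subspace_lev lev0). Qed.

Lemma lead_level_ideal_pow s : (s <= m + m)%N ->
  forall w, ideal_pow mul br ideal_add_image s w -> lead_level s w.
Proof.
case: dder => _ dmul dbr.
elim: s => [|s IH] hs; first exact: lead_level_add_image.
have hM : (s.+2 < Mp.+1)%N by rewrite !ltnS.
apply: (ideal_pow_ind (n_gt1 := n_gt1)); first exact: subspace_lead_level.
  move=> y y0 y1.
  by apply: (lead_level_step dlin char0 subspace_lev (multilinear_br Hp) dbr
            (slot1_neq0 n_gt1) (npow_br Hp HN) (npow_br_succ Hp HN)
            (IH (ltnW hs) _ y0) (lead_level_add_image y1) hM).
move=> a b ha hb.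
pose x (i : 'I_2) := if i == ord0 then a else b.
have -> : mul a b = mul2 mul x by [].
by apply: (lead_level_step dlin char0 subspace_lev (multilinear_mul2 Hp) (d_mul2 dmul)
          (s0 := ord0) (s1 := ord_max) isT (npow_mul2 Hp n_gt1 HN) (npow_mul2_succ Hp HN)
          (IH (ltnW hs) _ ha) (lead_level_add_image hb) hM).
Qed.

Lemma nilpotent_ideal_add_image : nilpotent_ideal mul br ideal_add_image.
Proof.
split; first exact: is_ideal_ideal_add_image.
exists (m + m) => w hw.
apply: (lead_level_eq0 dlin (Mp := Mp) N_nil (npow_le Hp n_gt1 HN)) => //.
exact: lead_level_ideal_pow.
Qed.

End Nilpotent.
End DerivationImage.

Theorem corollary5p12 (F : fieldType) (V : vectType F) (n : nat)
  (mul : V -> V -> V) (br : ('I_n -> V) -> V) :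
  [pchar F] =i pred0 ->
  (2 <= n)%N ->
  poisson_nlie mul br ->
  solvable_alg mul br ->
  forall N : V -> Prop, is_Nil mul br N ->
  forall d : V -> V, derivation mul br d ->
  forall v, N v -> N (d v).
Proof.
move=> /pcharf0P char0 n_gt1 Hp _ N [[HN [m N_nil]] N_max] d dder v Nv.
have := nilpotent_ideal_add_image Hp n_gt1 HN dder char0 N_nil.
move=> /N_max; apply; exists 0, v; split => //; last by rewrite add0r.
exact: subspace0 (subspace_ideal HN).
Qed.
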